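(* Let $\mathcal{X}\subseteq\mathbb{R}^n$ be compact, $\mathcal{X}_0\subseteq\mathcal{X}$, $U\subseteq\mathbb{R}^m$, and $f:\mathcal{X}\times U\to\mathcal{X}$. Let $\mathcal{X}_{VF}\subseteq\mathcal{X}$ be partitioned as $\mathcal{X}_{VF}=\bigcup_{i=1}^{p}\mathcal{X}_{VF_i}$ for some $p\in\mathbb{N}$. Suppose there exist a function $\mathcal{T}:\mathcal{X}\times\mathcal{X}\to\mathbb{R}$ and functions $\mathcal{V}_i:\mathcal{X}\times\mathcal{X}\to\mathbb{R}_{\geq0}$ (bounded from below), $1\le i\le p$, such that: (i) for every $x\in\mathcal{X}$ there exists $u\in U$ with $\mathcal{T}(x,f(x,u))\geq 0$; (ii) for all $x,y\in\mathcal{X}$ and all $u\in U$: if $\mathcal{T}(x,f(x,u))\geq 0$ and $\mathcal{T}(f(x,u),y)\geq 0$, then $\mathcal{T}(x,y)\geq 0$; (iii) for every $x_0\in\mathcal{X}_0$ and every $1\le i\le p$ there exists $\xi_i>0$ such that for all $z,z'\in\mathcal{X}_{VF_i}$: if $\mathcal{T}(x_0,z)\geq0$ and $\mathcal{T}(z,z')\geq 0$, then $\mathcal{V}_i(x_0,z')\leq\mathcal{V}_i(x_0,z)-\xi_i$. Then there exists a state-feedback controller $\kappa:\mathcal{X}\to 2^U\setminus\{\emptyset\}$ such that every state trajectory of the system under $\kappa$ visits $\mathcal{X}_{VF}$ only finitely often.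
   Context: A discrete-time control system $(\mathcal{X},\mathcal{X}_0,U,f)$ has compact state set $\mathcal{X}$, initial set $\mathcal{X}_0$, input set $U$ and transition function $f$. Given a state-feedback controller $\kappa:\mathcal{X}\to 2^U\setminus\{\emptyset\}$, a state trajectory under $\kappa$ is any sequence $\langle x_0,x_1,\ldots\rangle$ with $x_0\in\mathcal{X}_0$ and $x_{k+1}=f(x_k,u_k)$ for some $u_k\in\kappa(x_k)$, for all $k\in\mathbb{N}$. A trajectory visits a set only finitely often if only finitely many $x_k$ lie in that set. *)

From HB Require Import structures.
From mathcomp Require Import all_boot all_order all_algebra.
From mathcomp Require Import all_classical all_reals all_analysis.
Import numFieldNormedType.Exports.
Set Implicit Arguments. Unset Strict Implicit. Unset Printing Implicit Defensive.
Local Open Scope classical_set_scope.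

Definition is_controller {S I : Type} (X : set S) (U : set I)
  (kappa : S -> set I) : Prop :=
  forall x, X x -> kappa x `<=` U /\ kappa x !=set0.

Definition is_trajectory {S I : Type} (X0 : set S) (f : S -> I -> S)
  (kappa : S -> set I) (xs : nat -> S) : Prop :=
  X0 (xs 0%N) /\ forall k : nat, exists2 u, kappa (xs k) u & xs k.+1 = f (xs k) u.

Definition visits_finitely_often {S : Type} (xs : nat -> S) (A : set S) : Prop :=
  finite_set [set k : nat | A (xs k)].

From HB Require Import structures.
From mathcomp Require Import all_boot all_order all_algebra.
From mathcomp Require Import all_classical all_reals all_analysis.
Import numFieldNormedType.Exports.
Import Order.TTheory GRing.Theory Num.Theory.
Set Implicit Arguments. Unset Strict Implicit. Unset Printing Implicit Defensive.
Local Open Scope classical_set_scope.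
Local Open Scope ring_scope.

(* Take kappa(x) = {u in U | T(x, f(x,u)) >= 0}, nonempty by (i). Along a
   trajectory under kappa, (ii) propagates T(x_j, x_k) >= 0 to all j < k, so by
   (iii) the nonnegative quantity V_i(x_0, x_k) drops by at least xi_i between
   any two visits of X_VF_i after time 0; hence there are only finitely many. *)

Lemma finite_set_strict_antitone (S : set nat) (w : nat -> nat) :
  (forall j k, S j -> S k -> (j < k)%N -> (w k < w j)%N) -> finite_set S.
Proof.
move=> antiw.
have [[k0 Sk0]|S0] := pselect (exists k, S k); last first.
  by apply: (@sub_finite_set _ _ set0 _ (finite_set0 _)) => k Sk; apply: S0; exists k.
have /ex_minnP[j /asboolP Sj minj] : exists k, `[< S k >] by exists k0; apply/asboolP.
have w_inj : {in S &, injective w}.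
  move=> k l; rewrite !inE => Sk Sl wkl.
  by have [/(antiw _ _ Sk Sl)|/(antiw _ _ Sl Sk)|] := ltngtP k l; rewrite ?wkl ?ltnn.
rewrite -(eq_finite_set (inj_card_eq w_inj)).
apply: (@sub_finite_set _ _ `I_(w j).+1); last exact: finite_II.
move=> _ [k Sk <-] /=; rewrite ltnS.
have [jk|kj|<-//] := ltngtP j k; first exact/ltnW/antiw.
by have := minj _ (asboolT Sk); rewrite leqNgt kj.
Qed.

Lemma finite_set_descent (R : archiRealFieldType) (S : set nat) (v : nat -> R) (xi : R) :
  0 < xi -> (forall k, S k -> 0 <= v k) ->
  (forall j k, S j -> S k -> (j < k)%N -> v k <= v j - xi) -> finite_set S.
Proof.
move=> xi_gt0 v_ge0 v_descent.
apply: (@finite_set_strict_antitone _ (fun k => Num.truncn (v k / xi))).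
move=> j k Sj Sk jk.
rewrite truncn_lt_nat ?divr_ge0 ?v_ge0 ?ltW //.
rewrite (@le_lt_trans _ _ (v j / xi - 1)) //.
  by rewrite ler_pdivrMr // mulrBl divfK ?gt_eqF // mul1r v_descent.
by rewrite ltrBlDr natr1 truncnS_gt.
Qed.

Lemma visits_finitely_often_descent (R : archiRealFieldType) (S : Type)
    (xs : nat -> S) (A : set S) (P : S -> S -> Prop) (v : S -> R) (xi : R) :
  0 < xi -> (forall j k, (j < k)%N -> P (xs j) (xs k)) ->
  (forall k, A (xs k) -> 0 <= v (xs k)) ->
  (forall z z', A z -> A z' -> P (xs 0%N) z -> P z z' -> v z' <= v z - xi) ->
  visits_finitely_often xs A.
Proof.
move=> xi_gt0 chain v_ge0 v_descent.
(* Time 0 is set apart: [P (xs 0) (xs 0)] is not available. *)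
apply: (@sub_finite_set _ _ ([set 0%N] `|` [set k | (0 < k)%N /\ A (xs k)])).
  by case=> [|k] Ak; [left | right].
rewrite finite_setU; split; first exact: finite_set1.
apply: (@finite_set_descent _ _ (v \o xs) _ xi_gt0).
  by move=> k [_ /v_ge0].
move=> j k [j_gt0 Aj] [_ Ak] jk.
exact: v_descent (chain _ _ j_gt0) (chain _ _ jk).
Qed.

Section TransitionController.
Variables (S I : Type) (X X0 : set S) (U : set I) (f : S -> I -> S).

Lemma trajectory_invariant (kappa : S -> set I) (xs : nat -> S) :
  X0 `<=` X -> (forall x u, X x -> U u -> X (f x u)) ->
  is_controller X U kappa -> is_trajectory X0 f kappa xs ->
  forall k, X (xs k).
Proof.
move=> X0X fX kappaU [xs0 xs_step]; elim=> [|k Xk]; first exact: X0X.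
have [u kappa_u ->] := xs_step k.
by apply: fX => //; apply: (kappaU _ Xk).1.
Qed.

Variable P : S -> S -> Prop.

Definition transition_controller (x : S) : set I := [set u | U u /\ P x (f x u)].

Lemma transition_controller_is_controller :
  (forall x, X x -> exists2 u, U u & P x (f x u)) ->
  is_controller X U transition_controller.
Proof.
move=> P_total x /P_total[u Uu Pu]; split; first by move=> ? [].
by exists u.
Qed.

Lemma transition_controller_chain (xs : nat -> S) :
  (forall x y u, X x -> X y -> U u -> P x (f x u) -> P (f x u) y -> P x y) ->
  is_trajectory X0 f transition_controller xs -> (forall k, X (xs k)) ->
  forall j k, (j < k)%N -> P (xs j) (xs k).
Proof.
move=> P_trans [_ xs_step] xsX.
have chain d j : P (xs j) (xs (d.+1 + j)%N).
  elim: d j => [|d IHd] j; first by have [u [_ Pu] ->] := xs_step j.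
  have [u [Uu Pu] xs_next] := xs_step j.
  apply: (P_trans _ _ u (xsX j) (xsX _) Uu Pu).
  by rewrite -xs_next addSnnS; apply: IHd.
by move=> j k jk; rewrite -(subnK jk) -addSnnS; apply: chain.
Qed.

End TransitionController.

Theorem theorem2 (R : realType) (n m p : nat)
  (X X0 : set 'rV[R]_n) (U : set 'rV[R]_m) (f : 'rV[R]_n -> 'rV[R]_m -> 'rV[R]_n)
  (XVF : 'I_p -> set 'rV[R]_n)
  (T : 'rV[R]_n -> 'rV[R]_n -> R) (V : 'I_p -> 'rV[R]_n -> 'rV[R]_n -> R) :
  compact X ->
  X0 `<=` X ->
  (forall x u, X x -> U u -> X (f x u)) ->
  (forall i, XVF i `<=` X) ->
  (forall i j, i != j -> XVF i `&` XVF j = set0) ->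
  (forall i x y, X x -> X y -> 0 <= V i x y) ->
  (forall x, X x -> exists2 u, U u & 0 <= T x (f x u)) ->
  (forall x y u, X x -> X y -> U u ->
     0 <= T x (f x u) -> 0 <= T (f x u) y -> 0 <= T x y) ->
  (forall x0, X0 x0 -> forall i, exists2 xi : R, 0 < xi &
     forall z z', XVF i z -> XVF i z' -> 0 <= T x0 z -> 0 <= T z z' ->
       V i x0 z' <= V i x0 z - xi) ->
  exists kappa : 'rV[R]_n -> set 'rV[R]_m,
    is_controller X U kappa /\
    forall xs, is_trajectory X0 f kappa xs ->
      visits_finitely_often xs (\bigcup_(i in [set: 'I_p]) XVF i).
Proof.
move=> _ X0X fX _ _ V_ge0 T_total T_trans T_descent.
pose P x y := 0 <= T x y.
have kappaU := transition_controller_is_controller (P := P) T_total.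
exists (transition_controller U f P); split=> // xs traj.
have xsX := trajectory_invariant X0X fX kappaU traj.
have chain := transition_controller_chain T_trans traj xsX.
apply: bigcup_finite => [|i _]; first exact: finite_finset.
have [xi xi_gt0 V_descent] := T_descent _ traj.1 i.
apply: (visits_finitely_often_descent xi_gt0 chain _ V_descent) => k _.
exact: V_ge0.
Qed.
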